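(* Let $\mathsf{S}$ be the $2D\times 2D$ stability matrix of the RPA equation $\mathsf{S}\,\mathbf{x}_\nu=\omega_\nu\mathsf{N}\,\mathbf{x}_\nu$ with norm matrix $\mathsf{N}=\begin{pmatrix} 1&0\\ 0&-1 \end{pmatrix}$, where $\mathsf{S}=\mathsf{S}^\dagger$ and $\mathsf{\Sigma}_x\,\mathsf{S}^\ast\,\mathsf{\Sigma}_x = \mathsf{S}$ with $\mathsf{\Sigma}_x = \begin{pmatrix} 0&1\\1&0 \end{pmatrix}$. If $\mathsf{S}$ is positive-semidefinite, then every solution of the RPA equation is either a physical solution (a real nonzero eigenvalue, appearing in a pair $\pm\omega_\nu$, whose eigenvector is normalizable, i.e. has nonzero norm $\mathbf{x}_\nu^\dagger\mathsf{N}\,\mathbf{x}_\nu$, positive for $\omega_\nu>0$) or a Nambu-Goldstone (NG) mode solution (eigenvalue $\omega_\nu=0$, i.e. $\mathsf{S}\,\mathbf{x}_\nu=\mathbf{0}$); and the dimension of any Jordan block of $\mathsf{N\,S}$ associated with an NG-mode solution does not exceed two.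
   Context: The RPA equation is read as the eigenvalue problem of $\mathsf{N\,S}$. The classification into physical solutions and NG-mode solutions corresponds to Classes (1) and (5), respectively, of the five-class classification of RPA solutions in H. Nakada, PTEP (2016) (Prop. 2 there), based on the so-called UL- and LR-dualities. A Jordan block of $\mathsf{N\,S}$ at eigenvalue $0$ built on $\boldsymbol{\xi}_1=\mathbf{x}_\nu$ satisfies $\mathsf{S}\,\boldsymbol{\xi}_2 = i c_1\,\mathsf{N}\,\mathbf{x}_\nu$ with $c_1\in\mathbf{C}$, $c_1\neq 0$. *)

From HB Require Import structures.
From mathcomp Require Import all_boot all_order all_algebra.
Set Implicit Arguments. Unset Strict Implicit. Unset Printing Implicit Defensive.
Import Order.TTheory GRing.Theory Num.Theory.
Local Open Scope ring_scope.

(* Complex scalars: an arbitrary numeric algebraically closed field C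
   (e.g. complex numbers); conjugation is Num.conj, written x^*. *)

Section RPA.
Variable C : numClosedFieldType.
Variable D : nat.

Definition adj {m n} (A : 'M[C]_(m, n)) : 'M[C]_(n, m) := (map_mx Num.conj A)^T.

Definition cconj {m n} (A : 'M[C]_(m, n)) : 'M[C]_(m, n) := map_mx Num.conj A.

Definition Nmx : 'M[C]_(D + D) := block_mx 1%:M 0 0 (- 1%:M).

Definition Sigmax : 'M[C]_(D + D) := block_mx 0 1%:M 1%:M 0.

Definition psd (S : 'M[C]_(D + D)) : Prop :=
  forall x : 'cV[C]_(D + D), 0 <= (adj x *m S *m x) 0 0.

Definition rpa_solution (S : 'M[C]_(D + D)) (w : C) (x : 'cV[C]_(D + D)) : Prop :=
  x != 0 /\ S *m x = w *: (Nmx *m x).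

Definition rpa_norm (x : 'cV[C]_(D + D)) : C := (adj x *m Nmx *m x) 0 0.

Definition physical_solution (S : 'M[C]_(D + D)) (w : C) (x : 'cV[C]_(D + D)) : Prop :=
  [/\ w \is Num.real, w != 0,
      exists y, rpa_solution S (- w) y,
      rpa_norm x != 0
    & 0 < w -> 0 < rpa_norm x].

Definition NG_solution (S : 'M[C]_(D + D)) (w : C) (x : 'cV[C]_(D + D)) : Prop :=
  w = 0 /\ S *m x = 0.

Definition jordan_chain {n} (A : 'M[C]_n) (lam : C) (xs : seq 'cV[C]_n) : Prop :=
  match xs with
  | [::] => False
  | x1 :: _ =>
      x1 != 0 /\ (A - lam%:M) *m x1 = 0 /\
      forall i, (i.+1 < size xs)%N ->
        (A - lam%:M) *m nth 0 xs i.+1 = nth 0 xs i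
  end.
End RPA.

(* The quadratic form q(x) = x^dag S x is tied to the RPA norm on solutions:
   S x = w N x gives q(x) = w (x^dag N x).  Both sides are real, so either
   q(x) > 0, and then w = q(x) / (x^dag N x) is real and nonzero with the sign
   of the norm (complex conjugation composed with Sigma_x maps it to the
   partner -w), or q(x) = 0, and then S x = 0 because a positive-semidefinite
   Hermitian form vanishes only on the kernel of its matrix.  For a Jordan
   chain N S xi1 = 0, N S xi2 = xi1, N S xi3 = xi2 the same fact applies to
   xi2: q(xi2) = xi3^dag S N S xi2 = xi3^dag S xi1 = 0, so S xi2 = 0 and
   xi1 = 0, which is absurd. *)
From HB Require Import structures.
From mathcomp Require Import all_boot all_order all_algebra.
From mathcomp Require Import ring.
Import Order.TTheory GRing.Theory Num.Theory.
Local Open Scope ring_scope.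
Set Implicit Arguments. Unset Strict Implicit.

Lemma quadratic_ge0_lin_eq0 (R : numFieldType) (a b : R) : 0 <= a -> 0 <= b ->
  (forall t, 0 <= t -> 0 <= t ^+ 2 * b - t * (a + a)) -> a = 0.
Proof.
move=> a_ge0 b_ge0 q_ge0.
have b1_gt0 : 0 < b + 1 by rewrite ltr_wpDl.
have b2_gt0 : 0 < b + 2%:R by rewrite ltr_wpDl.
have := q_ge0 (a / (b + 1)) (divr_ge0 a_ge0 (ltW b1_gt0)).
have -> : (a / (b + 1)) ^+ 2 * b - a / (b + 1) * (a + a) =
          - (a ^+ 2 * (b + 2%:R) / (b + 1) ^+ 2).
  by field; rewrite gt_eqF.
rewrite oppr_ge0 => q_le0.
have : a ^+ 2 * (b + 2%:R) / (b + 1) ^+ 2 = 0.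
  apply/eqP; rewrite eq_le q_le0 /=.
  by rewrite divr_ge0 ?mulr_ge0 ?exprn_ge0 // ltW.
move/eqP; rewrite !mulf_eq0 invr_eq0 !expf_eq0 /= (gt_eqF b2_gt0).
by rewrite (gt_eqF b1_gt0) !orbF orbb => /eqP.
Qed.

Section Adjoint.
Variable C : numClosedFieldType.

Lemma adjM m n p (A : 'M[C]_(m, n)) (B : 'M[C]_(n, p)) :
  adj (A *m B) = adj B *m adj A.
Proof. by rewrite /adj map_mxM trmx_mul. Qed.

Lemma adjK m n (A : 'M[C]_(m, n)) : adj (adj A) = A.
Proof. by rewrite /adj map_trmx trmxK map_mxCK. Qed.

Lemma adjB m n (A B : 'M[C]_(m, n)) : adj (A - B) = adj A - adj B.
Proof. by rewrite /adj map_mxB linearB. Qed.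

Lemma adjZ m n (c : C) (A : 'M[C]_(m, n)) : adj (c *: A) = c^* *: adj A.
Proof. by rewrite /adj map_mxZ linearZ. Qed.

Lemma adj_mx11 (A : 'M[C]_1) : adj A 0 0 = (A 0 0)^*.
Proof. by rewrite /adj !mxE. Qed.

Lemma adj_mul_ge0 n (v : 'cV[C]_n) : 0 <= (adj v *m v) 0 0.
Proof.
by rewrite mxE sumr_ge0 // => i _; rewrite /adj !mxE mulrC mul_conjC_ge0.
Qed.

Lemma adj_mul_eq0 n (v : 'cV[C]_n) : ((adj v *m v) 0 0 == 0) = (v == 0).
Proof.
apply/idP/eqP => [|->]; last by rewrite mulmx0 mxE.
rewrite mxE psumr_eq0 => [/allP v0|i _]; last first.
  by rewrite /adj !mxE mulrC mul_conjC_ge0.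
apply/matrixP => i j; rewrite (ord1 j) mxE.
have := v0 i (mem_index_enum _).
by rewrite /adj !mxE mulrC mul_conjC_eq0 => /eqP.
Qed.

Definition hform n (A : 'M[C]_n) (x : 'cV[C]_n) : C := (adj x *m A *m x) 0 0.

Lemma hform_real n (A : 'M[C]_n) x : adj A = A -> hform A x \is Num.real.
Proof.
by move=> hA; apply/CrealP; rewrite /hform -adj_mx11 !adjM adjK hA mulmxA.
Qed.

Lemma hformBZ n (A : 'M[C]_n) (t : C) x y : t \is Num.real ->
  hform A (x - t *: y) =
  hform A x - t * ((adj x *m A *m y) 0 0 + (adj y *m A *m x) 0 0)
  + t ^+ 2 * hform A y.
Proof.
move=> t_real; rewrite /hform adjB adjZ (conj_Creal t_real).
rewrite !mulmxBl !mulmxBr -!scalemxAr -!scalemxAl scalerA !mxE.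
by ring.
Qed.

(* Positive semidefiniteness makes t |-> q(x - t A x) a nonnegative quadratic
   whose linear coefficient is -2 |A x|^2 when q(x) = 0. *)
Lemma psd_hform_eq0 n (A : 'M[C]_n) x :
  adj A = A -> (forall y, 0 <= hform A y) -> hform A x = 0 -> A *m x = 0.
Proof.
move=> hA A_psd qx0; set y := A *m x.
have xAy : adj x *m A *m y = adj y *m y by rewrite /y adjM hA mulmxA.
have yAx : adj y *m A *m x = adj y *m y by rewrite -mulmxA.
apply/eqP; rewrite -adj_mul_eq0; apply/eqP.
apply: (quadratic_ge0_lin_eq0 (adj_mul_ge0 y) (A_psd y)) => t t_ge0.
have := A_psd (x - t *: y).
by rewrite hformBZ ?ger0_real // qx0 xAy yAx add0r addrC.
Qed.

End Adjoint.

Section NormMatrices.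
Variables (C : numClosedFieldType) (D : nat).
Local Notation N := (Nmx C D).
Local Notation Sig := (Sigmax C D).

Lemma adj_Nmx : adj N = N.
Proof.
rewrite /adj /Nmx map_block_mx tr_block_mx map_mxN !map_mx1 map_mx0.
by rewrite !trmx0 linearN /= trmx1.
Qed.

Lemma cconj_Nmx : cconj N = N.
Proof. by rewrite /cconj /Nmx map_block_mx map_mxN !map_mx1 map_mx0. Qed.

Lemma NmxK : N *m N = 1%:M.
Proof.
rewrite /Nmx mulmx_block !mulmx0 !mul0mx !mulmx1 mulNmx mul1mx.
by rewrite !addr0 !add0r opprK [RHS]scalar_mx_block.
Qed.

Lemma SigmaxK : Sig *m Sig = 1%:M.
Proof.
rewrite /Sigmax mulmx_block !mulmx0 !mul0mx !mulmx1 !addr0 !add0r.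
by rewrite [RHS]scalar_mx_block.
Qed.

Lemma Sigmax_Nmx : Sig *m N = - (N *m Sig).
Proof.
rewrite /Sigmax /Nmx !mulmx_block !mulmx0 !mul0mx !mulmx1 mulmxN mul1mx.
by rewrite !addr0 !add0r opp_block_mx oppr0 opprK.
Qed.

Lemma mulKNmx m (v : 'M[C]_(D + D, m)) : N *m (N *m v) = v.
Proof. by rewrite mulmxA NmxK mul1mx. Qed.

Lemma mulKSigmax m (v : 'M[C]_(D + D, m)) : Sig *m (Sig *m v) = v.
Proof. by rewrite mulmxA SigmaxK mul1mx. Qed.

End NormMatrices.

Section Conjugate.
Variable C : numClosedFieldType.

Lemma cconjM m n p (A : 'M[C]_(m, n)) (B : 'M[C]_(n, p)) :
  cconj (A *m B) = cconj A *m cconj B.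
Proof. exact: map_mxM. Qed.

Lemma cconjZ m n (c : C) (A : 'M[C]_(m, n)) : cconj (c *: A) = c^* *: cconj A.
Proof. exact: map_mxZ. Qed.

Lemma cconj_eq0 m n (A : 'M[C]_(m, n)) : (cconj A == 0) = (A == 0).
Proof. by rewrite map_mx_eq0. Qed.

End Conjugate.

Section RPA.
Variables (C : numClosedFieldType) (D : nat) (S : 'M[C]_(D + D)).
Hypothesis S_herm : adj S = S.
Hypothesis S_Sigmax : Sigmax C D *m cconj S *m Sigmax C D = S.
Hypothesis S_psd : psd S.
Local Notation N := (Nmx C D).
Local Notation Sig := (Sigmax C D).

Lemma rpa_norm_real (x : 'cV[C]_(D + D)) : rpa_norm x \is Num.real.
Proof. exact: hform_real (@adj_Nmx C D). Qed.

Lemma hform_rpa_solution w x : rpa_solution S w x -> hform S x = w * rpa_norm x.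
Proof. by case=> _ Sx; rewrite /hform -mulmxA Sx -scalemxAr mxE mulmxA. Qed.

Lemma rpa_solution_partner w x : w \is Num.real ->
  rpa_solution S w x -> rpa_solution S (- w) (Sig *m cconj x).
Proof.
move=> w_real [x_neq0 Sx]; split.
  apply: contra x_neq0 => /eqP Sigx0.
  by rewrite -cconj_eq0 -(mulKSigmax (cconj x)) Sigx0 mulmx0.
rewrite -{1}S_Sigmax -!mulmxA mulKSigmax -cconjM Sx cconjZ cconjM cconj_Nmx.
rewrite (conj_Creal w_real) -scalemxAr !mulmxA Sigmax_Nmx.
by rewrite mulNmx scalerN scaleNr.
Qed.

Lemma rpa_solution_NG w x : rpa_solution S w x -> hform S x = 0 ->
  NG_solution S w x.
Proof.
move=> [x_neq0 Sx] /(psd_hform_eq0 S_herm S_psd) Sx0; split=> //.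
move: Sx; rewrite Sx0 => /esym/eqP; rewrite scaler_eq0 => /orP[/eqP //|/eqP Nx0].
by case/eqP: x_neq0; rewrite -(mulKNmx x) Nx0 mulmx0.
Qed.

Lemma rpa_solution_physical w x : rpa_solution S w x -> hform S x != 0 ->
  physical_solution S w x.
Proof.
move=> sol qx_neq0; have qxE := hform_rpa_solution sol.
have qx_gt0 : 0 < hform S x by rewrite lt_def qx_neq0 S_psd.
have nx_neq0 : rpa_norm x != 0.
  by apply: contra qx_neq0; rewrite qxE => /eqP ->; rewrite mulr0.
have w_neq0 : w != 0.
  by apply: contra qx_neq0; rewrite qxE => /eqP ->; rewrite mul0r.
have w_real : w \is Num.real.
  have -> : w = hform S x / rpa_norm x by rewrite qxE mulfK.
  by rewrite rpredM ?rpredV ?rpa_norm_real ?gtr0_real.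
split=> //; first by exists (Sig *m cconj x); apply: rpa_solution_partner.
by move=> w_gt0; move: qx_gt0; rewrite qxE pmulr_rgt0.
Qed.

Lemma rpa_solution_classes w x : rpa_solution S w x ->
  physical_solution S w x \/ NG_solution S w x.
Proof.
move=> sol; have [qx0|qx_neq0] := eqVneq (hform S x) 0.
  by right; apply: rpa_solution_NG.
by left; apply: rpa_solution_physical.
Qed.

Lemma jordan_chain_NS_size xs : jordan_chain (N *m S) 0 xs -> (size xs <= 2)%N.
Proof.
case: xs => [|x1 [|x2 [|x3 xs]]] //=; rewrite raddf0 subr0.
move=> [x1_neq0 [NSx1 chain]]; exfalso.
have NSx2 := chain 0%N isT; have NSx3 := chain 1%N isT; rewrite /= in NSx2 NSx3.
have Sx1 : S *m x1 = 0 by rewrite -(mulKNmx (S *m x1)) (mulmxA N S) NSx1 mulmx0.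
have : hform S x2 = 0.
  rewrite /hform -{1}NSx3 !adjM adj_Nmx S_herm -!mulmxA (mulmxA N) NSx2.
  by rewrite Sx1 !mulmx0 mxE.
move/(psd_hform_eq0 S_herm S_psd) => Sx2.
by move: x1_neq0; rewrite -NSx2 -mulmxA Sx2 mulmx0 eqxx.
Qed.

End RPA.

Theorem proposition1 (C : numClosedFieldType) (D : nat) (S : 'M[C]_(D + D)) :
  adj S = S ->
  Sigmax C D *m cconj S *m Sigmax C D = S ->
  psd S ->
  (forall (w : C) (x : 'cV[C]_(D + D)), rpa_solution S w x ->
     physical_solution S w x \/ NG_solution S w x) /\
  (forall xs : seq 'cV[C]_(D + D),
     jordan_chain (Nmx C D *m S) 0 xs -> (size xs <= 2)%N).
Proof.
move=> S_herm S_Sigmax S_psd; split.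
- exact: rpa_solution_classes.
- exact: jordan_chain_NS_size.
Qed.
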